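(* Let $\beta_1 = 0$ and let $\beta_2 \in [0,1)$. There exist a one-dimensional online convex optimization problem (a compact convex feasible set $\mathcal{F} \subset \mathbb{R}$ and a sequence of convex loss functions $f_t : \mathcal{F} \to \mathbb{R}$ with uniformly bounded gradients) and an initial point $x_1 \in \mathcal{F}$ such that, for every initial step size $\alpha > 0$, the iterates $\{x_t\}$ of \textsc{Adam} with parameters $\alpha, \beta_1, \beta_2$ satisfy $R_T/T \not\to 0$ as $T \to \infty$.
   Context: \textsc{Adam} (without debiasing) on a closed convex set $\mathcal{F} \subset \mathbb{R}^d$ with loss functions $f_1, f_2, \dots$, initial point $x_1 \in \mathcal{F}$, initial step size $\alpha > 0$ and constants $\beta_1, \beta_2 \in [0,1)$ is defined as follows. Set $m_0 = v_0 = 0 \in \mathbb{R}^d$. For $t = 1, 2, \dots$: $g_t = \nabla f_t(x_t)$; $m_t = \beta_1 m_{t-1} + (1-\beta_1) g_t$; $v_t = \beta_2 v_{t-1} + (1-\beta_2) g_t^2$ (square taken coordinatewise); $V_t = \mathrm{diag}(v_t)$; $\alpha_t = \alpha/\sqrt{t}$; $\hat{x}_{t+1} = x_t - \alpha_t V_t^{-1/2} m_t$; $x_{t+1} = \Pi_{\mathcal{F}, \sqrt{V_t}}(\hat{x}_{t+1})$, where for a positive definite matrix $M$, $\Pi_{\mathcal{F}, M}(y) = \arg\min_{x \in \mathcal{F}} \|M^{1/2}(x-y)\|$. The regret after $T$ steps is $R_T = \sum_{t=1}^T f_t(x_t) - \min_{x \in \mathcal{F}} \sum_{t=1}^T f_t(x)$.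 *)

(* classical reals. One-dimensional Adam (no debiasing). *)
From Stdlib Require Import Reals Lra ClassicalEpsilon.
Open Scope R_scope.

Definition in_F (a b x : R) : Prop := a <= x <= b.

Definition convex_on (a b : R) (h : R -> R) : Prop :=
  forall x y l, in_F a b x -> in_F a b y -> 0 <= l <= 1 ->
    h (l * x + (1 - l) * y) <= l * h x + (1 - l) * h y.

(* Weighted projection: p = argmin_{z in F} |M^{1/2} (z - y)| with M = sqrt(v),
   so M^{1/2} = v^{1/4} = sqrt (sqrt v). *)
Definition is_proj (a b v y p : R) : Prop :=
  in_F a b p /\
  forall z, in_F a b z ->
    Rabs (sqrt (sqrt v) * (p - y)) <= Rabs (sqrt (sqrt v) * (z - y)).

Fixpoint adam_m (beta1 : R) (g : nat -> R) (t : nat) : R :=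
  match t with
  | O => 0
  | S s => beta1 * adam_m beta1 g s + (1 - beta1) * g (S s)
  end.

Fixpoint adam_v (beta2 : R) (g : nat -> R) (t : nat) : R :=
  match t with
  | O => 0
  | S s => beta2 * adam_v beta2 g s + (1 - beta2) * (g (S s)) ^ 2
  end.

(* x : nat -> R is a run of Adam (indices t >= 1; x 0 is irrelevant)
   with gradient oracle df (df t y = f_t'(y)). *)
Definition is_adam_run (a b : R) (df : nat -> R -> R)
    (alpha beta1 beta2 x1 : R) (x : nat -> R) : Prop :=
  let g := fun t => df t (x t) in
  x 1%nat = x1 /\
  forall t : nat, (1 <= t)%nat ->
    is_proj a b (adam_v beta2 g t)
      (x t - alpha / sqrt (INR t) * (adam_m beta1 g t / sqrt (adam_v beta2 g t)))
      (x (S t)).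

Fixpoint cum_loss (f : nat -> R -> R) (y : nat -> R) (T : nat) : R :=
  match T with
  | O => 0
  | S s => cum_loss f y s + f (S s) (y (S s))
  end.

Definition is_min_on (a b : R) (h : R -> R) (mval : R) : Prop :=
  (exists u, in_F a b u /\ h u = mval) /\ forall z, in_F a b z -> mval <= h z.

(* min_{u in F} h u (chosen by classical epsilon; exists for continuous h). *)
Definition min_on (a b : R) (h : R -> R) : R :=
  epsilon (inhabits 0) (is_min_on a b h).

Definition regret (a b : R) (f : nat -> R -> R) (x : nat -> R) (T : nat) : R :=
  cum_loss f x T - min_on a b (fun u => cum_loss f (fun _ => u) T).

(* Run Adam on [0, 1] with linear losses whose gradient is n in every n-th round and -1
   otherwise.  The rare large gradient is forgotten by the second moment v_t after K rounds,
   so the spike moves the iterate down by at most alpha / sqrt (t (1 - beta2)), whereas each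
   of the n - K late rounds with gradient -1 moves it up by at least alpha / (2 sqrt t).
   For n and K chosen as functions of beta2 the iterate is therefore back at 1 in every
   spike round.  Each period then costs at least n - (n - 1) = 1 against the fixed point 0,
   so R_T / T stays above 1 / n. *)
From Stdlib Require Import Reals Lra Lia ClassicalEpsilon.
Open Scope R_scope.

Section SecondMoment.
Variables (beta2 : R) (g : nat -> R).
Hypothesis beta2_range : 0 <= beta2 < 1.

Lemma adam_v_ge0 t : 0 <= adam_v beta2 g t.
Proof.
  induction t as [|t IH]; simpl; [lra|].
  assert (0 <= g (S t) ^ 2) by (simpl; nra).
  nra.
Qed.

Lemma adam_v_le M t : 0 <= M -> (forall s, g s ^ 2 <= M) -> adam_v beta2 g t <= M.
Proof.
  intros HM Hg; induction t as [|t IH]; simpl; [lra|].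
  specialize (Hg (S t)). nra.
Qed.

Lemma adam_v_ge_last t : (1 - beta2) * g (S t) ^ 2 <= adam_v beta2 g (S t).
Proof. simpl. pose proof (adam_v_ge0 t). nra. Qed.

Lemma adam_v_decay M s r : 0 <= M ->
  (forall i, (1 <= i <= r)%nat -> g (s + i)%nat ^ 2 <= M) ->
  adam_v beta2 g (s + r) <= beta2 ^ r * adam_v beta2 g s + M.
Proof.
  intros HM; induction r as [|r IH]; intros Hg.
  - rewrite Nat.add_0_r. simpl. lra.
  - pose proof (IH (fun i Hi => Hg i ltac:(lia))) as IH'.
    pose proof (Hg (S r) ltac:(lia)) as Hlast.
    rewrite Nat.add_succ_r in Hlast |- *. simpl adam_v. simpl pow.
    nra.
Qed.

End SecondMoment.

Lemma adam_m_no_momentum g t : (1 <= t)%nat -> adam_m 0 g t = g t.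
Proof. intros Ht. destruct t; [lia|]. simpl. ring. Qed.

Lemma is_proj_ge_min a b v y p : 0 < v -> is_proj a b v y p -> Rmin b y <= p.
Proof.
  intros Hv [[Hap Hpb] Hopt].
  destruct (Rle_lt_dec (Rmin b y) p) as [Hle|Hlt]; [exact Hle|exfalso].
  assert (Hw : 0 < sqrt (sqrt v)) by (apply sqrt_lt_R0, sqrt_lt_R0; exact Hv).
  pose proof (Rmin_r b y) as Hmin_y.
  specialize (Hopt (Rmin b y) (conj (Rlt_le _ _ (Rle_lt_trans _ _ _ Hap Hlt)) (Rmin_l b y))).
  rewrite !Rabs_mult, (Rabs_pos_eq (sqrt (sqrt v))), (Rabs_left (p - y)),
    (Rabs_left1 (Rmin b y - y)) in Hopt by lra.
  nra.
Qed.

Lemma clipped_growth (c e : R) (y : nat -> R) m k : 0 <= e ->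
  (forall i, (i < k)%nat -> Rmin c (y (m + i)%nat + e) <= y (S (m + i))) ->
  Rmin c (y m + INR k * e) <= y (m + k)%nat.
Proof.
  intros He; induction k as [|k IH]; intros Hstep.
  - rewrite Nat.add_0_r, Rmult_0_l, Rplus_0_r. apply Rmin_r.
  - pose proof (IH (fun i Hi => Hstep i ltac:(lia))) as IH'.
    pose proof (Hstep k ltac:(lia)) as Hlast.
    rewrite Nat.add_succ_r, S_INR.
    unfold Rmin in *; repeat destruct Rle_dec; lra.
Qed.

(* The counterexample of Reddi, Kale and Kumar with period and spike size both n: the
   gradients of one period sum to 1 > 0, so the best fixed point is 0. *)
Definition spike (n t : nat) : R := if (t mod n =? 0)%nat then INR n else -1.

Definition spike_loss (n t : nat) (y : R) : R := y * spike n t.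

Lemma spike_top n t : (t mod n = 0)%nat -> spike n t = INR n.
Proof. intros H. unfold spike. rewrite H. reflexivity. Qed.

Lemma spike_off n q i : (1 <= i < n)%nat -> spike n (q * n + i) = -1.
Proof.
  intros Hi. unfold spike.
  rewrite Nat.add_comm, Nat.Div0.mod_add, Nat.mod_small by lia.
  destruct i; [lia|]. reflexivity.
Qed.

Lemma spike_sq_bounds n t : (1 <= n)%nat -> 1 <= spike n t ^ 2 <= INR n ^ 2.
Proof.
  intros Hn. assert (1 <= INR n) by (apply (le_INR 1); lia).
  unfold spike; destruct (_ =? _)%nat; simpl; nra.
Qed.

Lemma Rabs_spike_le n t : (1 <= n)%nat -> Rabs (spike n t) <= INR n.
Proof.
  intros Hn. assert (1 <= INR n) by (apply (le_INR 1); lia).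
  unfold spike; destruct (_ =? _)%nat.
  - rewrite Rabs_pos_eq; lra.
  - rewrite Rabs_left; lra.
Qed.

Lemma cum_loss_spike_const n T u :
  cum_loss (spike_loss n) (fun _ => u) T = u * cum_loss (spike_loss n) (fun _ => 1) T.
Proof. induction T as [|T IH]; simpl; [ring|]. rewrite IH. unfold spike_loss. ring. Qed.

Lemma min_on_le a b h mval z : is_min_on a b h mval -> in_F a b z -> min_on a b h <= h z.
Proof.
  intros Hmin Hz. unfold min_on.
  destruct (epsilon_spec (inhabits 0) (is_min_on a b h) (ex_intro _ mval Hmin)) as [_ Hle].
  exact (Hle z Hz).
Qed.

Lemma linear_has_min a b s h : a <= b -> (forall u, h u = u * s) ->
  exists mval, is_min_on a b h mval.
Proof.
  intros Hab Hh. destruct (Rle_lt_dec 0 s) as [Hs|Hs].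
  - exists (a * s). split.
    + exists a. split; [unfold in_F; lra|apply Hh].
    + intros z [Hz _]. rewrite Hh. nra.
  - exists (b * s). split.
    + exists b. split; [unfold in_F; lra|apply Hh].
    + intros z [_ Hz]. rewrite Hh. nra.
Qed.

Lemma cum_loss_le_regret n x T :
  cum_loss (spike_loss n) x T <= regret 0 1 (spike_loss n) x T.
Proof.
  unfold regret.
  destruct (linear_has_min 0 1 (cum_loss (spike_loss n) (fun _ => 1) T)
              (fun u => cum_loss (spike_loss n) (fun _ => u) T) ltac:(lra)
              (cum_loss_spike_const n T)) as [mval Hmin].
  pose proof (min_on_le _ _ _ _ 0 Hmin ltac:(unfold in_F; lra)) as Hle.
  cbv beta in Hle. rewrite cum_loss_spike_const, Rmult_0_l in Hle. lra.
Qed.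

Section SpikeRun.
Variables (n : nat) (alpha beta2 : R) (x : nat -> R).
Hypotheses (n_pos : (1 <= n)%nat) (alpha_pos : 0 < alpha) (beta2_range : 0 <= beta2 < 1)
  (run : is_adam_run 0 1 (fun t _ => spike n t) alpha 0 beta2 1 x).

Local Notation v := (adam_v beta2 (spike n)).

Lemma run_in_unit t : (1 <= t)%nat -> 0 <= x t <= 1.
Proof.
  destruct run as [Hx1 Hstep]. intros Ht.
  destruct t as [|t]; [lia|].
  destruct (Nat.eq_dec t 0) as [->|Ht0]; [rewrite Hx1; lra|].
  exact (proj1 (Hstep t ltac:(lia))).
Qed.

Lemma spike_v_ge t : (1 <= t)%nat -> 1 - beta2 <= v t.
Proof.
  intros Ht. destruct t as [|t]; [lia|].
  pose proof (adam_v_ge_last beta2 (spike n) beta2_range t).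
  pose proof (spike_sq_bounds n (S t) n_pos). nra.
Qed.

Lemma run_step t : (1 <= t)%nat ->
  Rmin 1 (x t - alpha / sqrt (INR t) * (spike n t / sqrt (v t))) <= x (S t).
Proof.
  intros Ht. pose proof (proj2 run t Ht) as Hproj.
  change (fun s : nat => (fun (t : nat) (_ : R) => spike n t) s (x s)) with (spike n) in Hproj.
  rewrite adam_m_no_momentum in Hproj by exact Ht.
  eapply is_proj_ge_min; [|exact Hproj].
  pose proof (spike_v_ge t Ht). lra.
Qed.

Lemma run_up_step t : (1 <= t)%nat -> spike n t = -1 ->
  Rmin 1 (x t + alpha / (sqrt (INR t) * sqrt (v t))) <= x (S t).
Proof.
  intros Ht Hspike. pose proof (run_step t Ht) as Hstep.
  assert (0 < sqrt (INR t)) by (apply sqrt_lt_R0, (lt_INR 0); lia).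
  assert (0 < sqrt (v t)) by (apply sqrt_lt_R0; pose proof (spike_v_ge t Ht); lra).
  rewrite Hspike in Hstep.
  replace (x t + alpha / (sqrt (INR t) * sqrt (v t)))
    with (x t - alpha / sqrt (INR t) * (-1 / sqrt (v t))) by (field; lra).
  exact Hstep.
Qed.

Lemma run_down_step t : (1 <= t)%nat -> (t mod n = 0)%nat ->
  Rmin 1 (x t - alpha / (sqrt (INR t) * sqrt (1 - beta2))) <= x (S t).
Proof.
  intros Ht Htop. pose proof (run_step t Ht) as Hstep.
  rewrite spike_top in Hstep by exact Htop.
  eapply Rle_trans; [|exact Hstep]. apply Rle_min_compat_l.
  assert (HnR : 1 <= INR n) by (apply (le_INR 1); lia).
  assert (Hst : 0 < sqrt (INR t)) by (apply sqrt_lt_R0, (lt_INR 0); lia).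
  assert (Hsb : 0 < sqrt (1 - beta2)) by (apply sqrt_lt_R0; lra).
  assert (Hv : sqrt (1 - beta2) * INR n <= sqrt (v t)).
  { rewrite <- (sqrt_pow2 (INR n)), <- sqrt_mult by nra.
    apply sqrt_le_1_alt.
    destruct t as [|t]; [lia|].
    pose proof (adam_v_ge_last beta2 (spike n) beta2_range t).
    rewrite spike_top in * by exact Htop. lra. }
  assert (Hratio : INR n / sqrt (v t) <= / sqrt (1 - beta2)).
  { replace (INR n / sqrt (v t))
      with (sqrt (1 - beta2) * INR n * / (sqrt (1 - beta2) * sqrt (v t))) by (field; nra).
    replace (/ sqrt (1 - beta2))
      with (sqrt (v t) * / (sqrt (1 - beta2) * sqrt (v t))) by (field; nra).
    apply Rmult_le_compat_r; [left; apply Rinv_0_lt_compat; nra|exact Hv]. }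
  assert (Hpre : 0 < alpha / sqrt (INR t)) by (apply Rdiv_lt_0_compat; lra).
  apply Rplus_le_compat_l, Ropp_le_contravar.
  replace (alpha / (sqrt (INR t) * sqrt (1 - beta2)))
    with (alpha / sqrt (INR t) * / sqrt (1 - beta2)) by (field; lra).
  apply Rmult_le_compat_l; lra.
Qed.

Lemma run_clipped_monotone m k : (1 <= m)%nat ->
  (forall i, (i < k)%nat -> spike n (m + i) = -1) ->
  Rmin 1 (x m) <= x (m + k)%nat.
Proof.
  intros Hm Hspikes.
  rewrite <- (Rplus_0_r (x m)), <- (Rmult_0_r (INR k)).
  apply clipped_growth; [lra|]. intros i Hi.
  eapply Rle_trans; [|apply run_up_step; [lia|exact (Hspikes i Hi)]].
  apply Rle_min_compat_l, Rplus_le_compat_l, Rlt_le, Rdiv_lt_0_compat; [lra|].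
  apply Rmult_lt_0_compat; apply sqrt_lt_R0.
  - apply (lt_INR 0); lia.
  - pose proof (spike_v_ge (m + i) ltac:(lia)). lra.
Qed.

Lemma run_first_top : x n = 1.
Proof.
  assert (Hmono : Rmin 1 (x 1%nat) <= x (1 + (n - 1))%nat).
  { apply run_clipped_monotone; [lia|]. intros i Hi.
    replace (1 + i)%nat with (0 * n + S i)%nat by lia.
    apply spike_off. lia. }
  replace (1 + (n - 1))%nat with n in Hmono by lia.
  rewrite (proj1 run), Rmin_left in Hmono by lra.
  pose proof (run_in_unit n n_pos). lra.
Qed.

Variable K : nat.
Hypotheses (K_pos : (1 <= K)%nat) (K_lt_n : (K < n)%nat)
  (spike_forgotten : beta2 ^ K * INR n ^ 2 <= 1)
  (recovery_time : 2 / sqrt (1 - beta2) <= INR (n - K)).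

Lemma run_late_up_step q i : (K <= i < n)%nat ->
  Rmin 1 (x (S q * n + i)%nat + alpha / (2 * sqrt (INR (S q * n))))
    <= x (S (S q * n + i)).
Proof.
  intros Hi. set (t := (S q * n)%nat). set (s := (t + i)%nat).
  assert (Hnt : (n <= t)%nat) by (unfold t; nia).
  assert (HtR : 0 < INR t) by (apply (lt_INR 0); lia).
  assert (Hvs : v s <= 2).
  { assert (Hvt : v t <= INR n ^ 2).
    { apply adam_v_le; [exact beta2_range|nra|]. intros r. apply (spike_sq_bounds n r n_pos). }
    assert (Hdecay : v s <= beta2 ^ i * v t + 1).
    { apply adam_v_decay; [exact beta2_range|lra|]. intros j Hj.
      unfold t. rewrite spike_off by lia. lra. }
    assert (Hpow : beta2 ^ i <= beta2 ^ K).
    { replace i with (K + (i - K))%nat by lia. rewrite pow_add.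
      pose proof (pow_le beta2 K (proj1 beta2_range)).
      pose proof (pow_incr beta2 1 (i - K) (conj (proj1 beta2_range) (Rlt_le _ _ (proj2 beta2_range)))).
      rewrite pow1 in *. nra. }
    pose proof (adam_v_ge0 beta2 (spike n) beta2_range t).
    pose proof (pow_le beta2 i (proj1 beta2_range)). nra. }
  assert (HsR : INR s <= 2 * INR t).
  { replace 2 with (INR 2) by reflexivity. rewrite <- mult_INR. apply le_INR. unfold s. lia. }
  assert (Hden : sqrt (INR s) * sqrt (v s) <= 2 * sqrt (INR t)).
  { rewrite <- sqrt_mult by (apply pos_INR || apply adam_v_ge0; exact beta2_range).
    rewrite <- (sqrt_pow2 2), <- sqrt_mult by lra. apply sqrt_le_1_alt.
    pose proof (pos_INR s). pose proof (adam_v_ge0 beta2 (spike n) beta2_range s). nra. }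
  assert (Hden_pos : 0 < sqrt (INR s) * sqrt (v s)).
  { apply Rmult_lt_0_compat; apply sqrt_lt_R0; [apply (lt_INR 0); lia|].
    pose proof (spike_v_ge s ltac:(lia)). lra. }
  eapply Rle_trans; [|apply run_up_step; [lia|unfold s, t; apply spike_off; lia]].
  apply Rle_min_compat_l, Rplus_le_compat_l.
  unfold Rdiv. apply Rmult_le_compat_l; [lra|]. apply Rinv_le_contravar; lra.
Qed.

Lemma run_top_recurs q : x (S q * n)%nat = 1 -> x (S (S q) * n)%nat = 1.
Proof.
  intros Htop. set (t := (S q * n)%nat) in *.
  assert (HtR : 0 < INR t) by (apply (lt_INR 0); unfold t; nia).
  assert (Hst : 0 < sqrt (INR t)) by (apply sqrt_lt_R0; lra).
  set (d := alpha / (sqrt (INR t) * sqrt (1 - beta2))).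
  set (e := alpha / (2 * sqrt (INR t))).
  assert (Hdown : Rmin 1 (1 - d) <= x (S t)).
  { pose proof (run_down_step t ltac:(unfold t; nia) (Nat.Div0.mod_mul _ _)) as Hstep.
    rewrite Htop in Hstep. exact Hstep. }
  assert (Hrest : Rmin 1 (x (S t)) <= x (S t + (K - 1))%nat).
  { apply run_clipped_monotone; [lia|]. intros i Hi.
    replace (S t + i)%nat with (S q * n + S i)%nat by (unfold t; lia).
    apply spike_off. lia. }
  assert (Hclimb : Rmin 1 (x (t + K)%nat + INR (n - K) * e) <= x (t + K + (n - K))%nat).
  { apply clipped_growth; [unfold e; apply Rlt_le, Rdiv_lt_0_compat; lra|].
    intros i Hi. replace (t + K + i)%nat with (S q * n + (K + i))%nat by (unfold t; lia).
    apply run_late_up_step. lia. }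
  assert (Hde : d <= INR (n - K) * e).
  { assert (He : 0 <= e) by (unfold e; apply Rlt_le, Rdiv_lt_0_compat; lra).
    apply Rle_trans with (2 / sqrt (1 - beta2) * e); [|apply Rmult_le_compat_r; lra].
    assert (0 < sqrt (1 - beta2)) by (apply sqrt_lt_R0; lra).
    right. unfold d, e. field. lra. }
  replace (S t + (K - 1))%nat with (t + K)%nat in Hrest by lia.
  replace (t + K + (n - K))%nat with (S (S q) * n)%nat in Hclimb by (unfold t; lia).
  pose proof (run_in_unit (S (S q) * n) ltac:(nia)).
  assert (0 < d) by (apply Rdiv_lt_0_compat, Rmult_lt_0_compat, sqrt_lt_R0; lra).
  unfold Rmin in *; repeat destruct Rle_dec; lra.
Qed.

Lemma run_tops q : x (S q * n)%nat = 1.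
Proof.
  induction q as [|q IH].
  - rewrite Nat.mul_1_l. exact run_first_top.
  - exact (run_top_recurs q IH).
Qed.

Lemma cum_loss_run_ge Q : INR Q <= cum_loss (spike_loss n) x (Q * n).
Proof.
  assert (Hstep : forall t, (1 <= t)%nat -> -1 <= spike_loss n t (x t)).
  { intros t Ht. pose proof (run_in_unit t Ht).
    assert (1 <= INR n) by (apply (le_INR 1); lia).
    unfold spike_loss, spike. destruct (_ =? _)%nat; nra. }
  induction Q as [|Q IH]; [simpl; lra|].
  assert (Hinner : forall r, (r <= n - 1)%nat ->
            INR Q - INR r <= cum_loss (spike_loss n) x (Q * n + r)).
  { induction r as [|r IHr]; intros Hr.
    - rewrite Nat.add_0_r. simpl. lra.
    - rewrite Nat.add_succ_r, S_INR. simpl cum_loss.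
      pose proof (IHr ltac:(lia)). pose proof (Hstep (S (Q * n + r)) ltac:(lia)). lra. }
  pose proof (Hinner (n - 1)%nat (le_n _)) as Hlast.
  replace (S Q * n)%nat with (S (Q * n + (n - 1))) by lia.
  simpl cum_loss.
  replace (S (Q * n + (n - 1))) with (S Q * n)%nat by lia.
  unfold spike_loss at 2. rewrite run_tops, spike_top by apply Nat.Div0.mod_mul.
  rewrite minus_INR in Hlast by lia. rewrite S_INR. simpl INR in Hlast. lra.
Qed.

Lemma regret_rate_at_tops Q : (1 <= Q)%nat ->
  / INR n <= regret 0 1 (spike_loss n) x (Q * n) / INR (Q * n).
Proof.
  intros HQ.
  assert (HnR : 0 < INR n) by (apply (lt_INR 0); lia).
  assert (HQR : 0 < INR Q) by (apply (lt_INR 0); lia).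
  pose proof (cum_loss_run_ge Q). pose proof (cum_loss_le_regret n x (Q * n)).
  rewrite mult_INR.
  replace (/ INR n) with (INR Q / (INR Q * INR n)) by (field; lra).
  unfold Rdiv. apply Rmult_le_compat_r; [left; apply Rinv_0_lt_compat; nra|lra].
Qed.

End SpikeRun.

Lemma exists_pow_mul_sq_le_1 b m : 0 <= b < 1 ->
  exists K : nat, (1 <= K)%nat /\ b ^ K * INR (K + m) ^ 2 <= 1.
Proof.
  intros Hb.
  set (q := (1 + b) / 2). set (h := (1 - b) / (1 + b)).
  assert (Hh : 0 < h) by (unfold h; apply Rdiv_lt_0_compat; lra).
  assert (Hh3 : 0 < h ^ 3) by (apply pow_lt; lra).
  assert (HmR : 0 <= INR m) by apply pos_INR.
  destruct (INR_unbounded ((3 + INR m) ^ 2 / h ^ 3)) as [j Hj].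
  assert (Hjh : (3 + INR m) ^ 2 <= INR j * h ^ 3).
  { apply Rlt_le, (Rmult_lt_reg_r (/ h ^ 3)); [apply Rinv_0_lt_compat; lra|].
    rewrite Rmult_assoc, Rinv_r, Rmult_1_r by lra. exact Hj. }
  assert (Hj1 : 1 <= INR j) by (destruct j; [simpl in Hjh; nra|rewrite S_INR; pose proof (pos_INR j); lra]).
  assert (Hj1nat : (1 <= j)%nat) by (apply INR_le; simpl; lra).
  exists (3 * j)%nat. split; [lia|].
  assert (Hgrowth : INR (3 * j + m) ^ 2 <= (1 + h) ^ (3 * j)).
  { assert (Hbern : INR j * h <= (1 + h) ^ j) by (pose proof (poly j h Hh); lra).
    rewrite plus_INR, mult_INR, Nat.mul_comm, pow_mult.
    apply Rle_trans with ((INR j * h) ^ 3); [|apply pow_incr; split; [nra|exact Hbern]].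
    replace (INR 3) with 3 by (simpl; lra).
    assert (3 * INR j + INR m <= (3 + INR m) * INR j) by nra.
    apply Rle_trans with (((3 + INR m) * INR j) ^ 2); [apply pow_incr; split; nra|].
    replace ((INR j * h) ^ 3) with (INR j ^ 2 * (INR j * h ^ 3)) by ring.
    rewrite Rpow_mult_distr, Rmult_comm. apply Rmult_le_compat_l; [nra|exact Hjh]. }
  assert (Hbq : b ^ (3 * j) <= q ^ (3 * j)) by (apply pow_incr; unfold q; lra).
  assert (Hinv : q ^ (3 * j) * (1 + h) ^ (3 * j) = 1).
  { rewrite <- Rpow_mult_distr. replace (q * (1 + h)) with 1 by (unfold q, h; field; lra).
    apply pow1. }
  pose proof (pow_le b (3 * j) (proj1 Hb)).
  pose proof (pow_le q (3 * j) ltac:(unfold q; lra)).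
  pose proof (pow2_ge_0 (INR (3 * j + m))).
  nra.
Qed.

Lemma block_parameters beta2 : 0 <= beta2 < 1 -> exists n K : nat,
  (1 <= K)%nat /\ (K < n)%nat /\ beta2 ^ K * INR n ^ 2 <= 1 /\
  2 / sqrt (1 - beta2) <= INR (n - K).
Proof.
  intros Hb.
  destruct (INR_unbounded (2 / sqrt (1 - beta2))) as [m Hm].
  destruct (exists_pow_mul_sq_le_1 beta2 m Hb) as [K [HK Hpow]].
  assert (Hm0 : (0 < m)%nat).
  { destruct m; [|lia]. exfalso. simpl in Hm.
    assert (0 < 2 / sqrt (1 - beta2)) by (apply Rdiv_lt_0_compat, sqrt_lt_R0; lra). lra. }
  exists (K + m)%nat, K.
  replace (K + m - K)%nat with m by lia.
  repeat split; [lia|lia|exact Hpow|lra].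
Qed.

Lemma not_Un_cv_0_frequently_ge u c : 0 < c ->
  (forall N, exists T, (N <= T)%nat /\ c <= u T) -> ~ Un_cv u 0.
Proof.
  intros Hc Hfreq Hcv.
  destruct (Hcv c Hc) as [N HN]. destruct (Hfreq N) as [T [HT Hu]].
  specialize (HN T HT). unfold Rdist in HN. rewrite Rminus_0_r in HN.
  pose proof (Rle_abs (u T)). lra.
Qed.

Theorem theorem1 :
  forall beta2 : R, 0 <= beta2 < 1 ->
  exists (a b : R) (f df : nat -> R -> R) (x1 : R),
    a <= b /\
    (forall t y, derivable_pt_lim (f t) y (df t y)) /\
    (forall t, convex_on a b (f t)) /\
    (exists G, forall t y, in_F a b y -> Rabs (df t y) <= G) /\
    in_F a b x1 /\
    forall alpha : R, 0 < alpha ->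
    forall x : nat -> R, is_adam_run a b df alpha 0 beta2 x1 x ->
      ~ Un_cv (fun T => regret a b f x T / INR T) 0.
Proof.
  intros beta2 Hb.
  destruct (block_parameters beta2 Hb) as (n & K & HK & HKn & Hforget & Hrecover).
  exists 0, 1, (spike_loss n), (fun t _ => spike n t), 1.
  split; [lra|]. split.
  { intros t y. rewrite <- (Rmult_1_l (spike n t)).
    exact (derivable_pt_lim_scal_right id y 1 (spike n t) (derivable_pt_lim_id y)). }
  split; [intros t u w l _ _ _; unfold spike_loss; right; ring|].
  split; [exists (INR n); intros t y _; apply Rabs_spike_le; lia|].
  split; [unfold in_F; lra|].
  intros alpha Halpha x Hrun.
  apply not_Un_cv_0_frequently_ge with (/ INR n).
  - apply Rinv_0_lt_compat, (lt_INR 0). lia.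
  - intros N. exists (S N * n)%nat. split; [nia|].
    exact (regret_rate_at_tops n alpha beta2 x ltac:(lia) Halpha Hb Hrun
             K HK HKn Hforget Hrecover (S N) ltac:(lia)).
Qed.
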